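(* Let $\mu$ be a monotone system over $\{0,1\}^V$ and $\theta\in(0,1)$. Then $P_{\mathrm{cl}}$, $P_{\mathrm{s\text{-}GD}}$ and $P_{\pi\text{-GD}}$ all belong to $\mathcal{MC}_\pi$, i.e. each is reversible with respect to $\pi$ and stochastically monotone.
   Context: Monotone system: for every $v$ and all feasible (positive probability) $\sigma\preceq\tau$ in $\{0,1\}^{V\setminus\{v\}}$ (coordinatewise), $\mu^\sigma_v(1)\le\mu^\tau_v(1)$. Tilted $(\theta*\mu)(\sigma)\propto\mu(\sigma)\theta^{\|\sigma\|_1}$. $\mathsf{lift}$: random map $\{0,1\}^V\to\{0,1,\star\}^V$, independently per coordinate $0\mapsto0$, $1\mapsto\star$ w.p. $1-\theta$, $1\mapsto1$ w.p. $\theta$. $\mathsf{contr}$: $0\mapsto0$, $1,\star\mapsto1$. $\pi$: law of $\mathsf{lift}(X)$, $X\sim\mu$, support $\Omega(\pi)$. $P_{\pi\text{-GD}}$: pick $v$ uniformly, resample $X_v$ from $\pi$ conditioned on $X_{V\setminus\{v\}}$. $P_{\mathrm{cl}}$: $X\mapsto\mathsf{lift}(\mathsf{contr}(X))$. $P_{\mathrm{s\text{-}GD}}$: pick $v$ uniformly; if $X_v=\star$ keep it; otherwise resample $X_v\in\{0,1\}$ from $(\theta*\mu)_v^{\sigma_{V\setminus\{v\}}}$ where $\sigma=\mathsf{contr}(X)$. Order $0<1<\star$, coordinatewise partial order on $\{0,1,\star\}^V$. A function $f:\Omega(\pi)\to\mathbb R_{\ge0}$ is increasing if $X\preceq Y\Rightarrow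 f(X)\le f(Y)$. A chain $P$ is stochastically monotone if $Pf$ is increasing for every increasing $f$. $P$ is reversible w.r.t. $\pi$ if $\pi(\sigma)P(\sigma,\tau)=\pi(\tau)P(\tau,\sigma)$ for all $\sigma,\tau$. *)

From HB Require Import structures.
From mathcomp Require Import all_boot all_order all_algebra.
Set Implicit Arguments. Unset Strict Implicit. Unset Printing Implicit Defensive.
Import Order.TTheory GRing.Theory Num.Theory.
Local Open Scope ring_scope.

Section Defs.
Variables (R : realFieldType) (V : finType).

(* {0,1}^V : false = 0, true = 1 *)
Definition cfg2 := {ffun V -> bool}.
(* {0,1,star}^V encoded by 'I_3 : 0 = 0, 1 = 1, 2 = star (nat order = 0<1<star) *)
Definition cfg3 := {ffun V -> 'I_3}.
Definition sZero : 'I_3 := @Ordinal 3 0 isT.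
Definition sOne  : 'I_3 := @Ordinal 3 1 isT.
Definition sStar : 'I_3 := @Ordinal 3 2 isT.

Definition upd2 (x : cfg2) (v : V) (b : bool) : cfg2 :=
  [ffun u => if u == v then b else x u].
Definition upd3 (x : cfg3) (v : V) (s : 'I_3) : cfg3 :=
  [ffun u => if u == v then s else x u].

Definition is_distr (mu : cfg2 -> R) :=
  (forall x, 0 <= mu x) /\ \sum_(x : cfg2) mu x = 1.

(* sigma_{V\{v}} (represented by any x agreeing off v) has positive probability *)
Definition feasible (mu : cfg2 -> R) (v : V) (x : cfg2) :=
  0 < mu (upd2 x v false) + mu (upd2 x v true).
Definition cond1 (mu : cfg2 -> R) (v : V) (x : cfg2) : R :=
  mu (upd2 x v true) / (mu (upd2 x v false) + mu (upd2 x v true)).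

Definition monotone_system (mu : cfg2 -> R) :=
  is_distr mu /\
  forall (v : V) (x y : cfg2),
    (forall u, u != v -> x u ==> y u) ->
    feasible mu v x -> feasible mu v y -> cond1 mu v x <= cond1 mu v y.

Definition ones (x : cfg2) : nat := #|[set v | x v]|.
Definition tilt (th : R) (mu : cfg2 -> R) (x : cfg2) : R :=
  mu x * th ^+ ones x / \sum_(y : cfg2) mu y * th ^+ ones y.

Definition liftp (th : R) (b : bool) (s : 'I_3) : R :=
  if b then (if s == sOne then th else if s == sStar then 1 - th else 0)
  else (if s == sZero then 1 else 0).
Definition liftK (th : R) (x : cfg2) (y : cfg3) : R :=
  \prod_(v : V) liftp th (x v) (y v).
Definition contr (y : cfg3) : cfg2 := [ffun v => y v != sZero].

Definition pi (th : R) (mu : cfg2 -> R) (y : cfg3) : R :=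
  \sum_(x : cfg2) mu x * liftK th x y.
Definition Omega (th : R) (mu : cfg2 -> R) : pred cfg3 :=
  fun y => 0 < pi th mu y.

Definition agree_off (v : V) (X Y : cfg3) : bool :=
  [forall u, (u != v) ==> (Y u == X u)].

Definition P_piGD (th : R) (mu : cfg2 -> R) (X Y : cfg3) : R :=
  (#|V|%:R)^-1 * \sum_(v : V)
     (if agree_off v X Y
      then pi th mu Y / \sum_(s : 'I_3) pi th mu (upd3 X v s) else 0).

Definition P_cl (th : R) (mu : cfg2 -> R) (X Y : cfg3) : R :=
  liftK th (contr X) Y.

Definition sGDv (th : R) (mu : cfg2 -> R) (v : V) (X Y : cfg3) : R :=
  if X v == sStar then (Y == X)%:R
  else if agree_off v X Y && (Y v != sStar) then
    (let c := cond1 (tilt th mu) v (contr X) in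
     if Y v == sOne then c else 1 - c)
  else 0.
Definition P_sGD (th : R) (mu : cfg2 -> R) (X Y : cfg3) : R :=
  (#|V|%:R)^-1 * \sum_(v : V) sGDv th mu v X Y.

Definition reversible (P : cfg3 -> cfg3 -> R) (p : cfg3 -> R) (S : pred cfg3) :=
  forall x y, S x -> S y -> p x * P x y = p y * P y x.
Definition le3 (X Y : cfg3) : bool := [forall v, (X v <= Y v)%N].
Definition increasing_on (S : pred cfg3) (f : cfg3 -> R) :=
  forall X Y, S X -> S Y -> le3 X Y -> f X <= f Y.
Definition stoch_monotone (P : cfg3 -> cfg3 -> R) (S : pred cfg3) :=
  forall f : cfg3 -> R, (forall X, S X -> 0 <= f X) -> increasing_on S f ->
    increasing_on S (fun X => \sum_(Y | S Y) P X Y * f Y).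

Definition inMC (th : R) (mu : cfg2 -> R) (P : cfg3 -> cfg3 -> R) :=
  reversible P (pi th mu) (Omega th mu) /\ stoch_monotone P (Omega th mu).

End Defs.

(* pi(Y) = mu(contr Y) * prod_u w(Y u) with w(0) = 1, w(1) = th, w(star) = 1 - th, so
   Omega(pi) is the set of Y with mu(contr Y) > 0.  Reversibility is detailed balance:
   P_cl only connects configurations with the same contraction, and both Glauber chains
   are averages of single-site kernels satisfying local detailed balance (for s-GD since
   raising a 0 to a 1 multiplies the tilted weight by exactly th).
   Monotonicity is by coupling.  For P_cl, zeroing the coordinates of lift(x') outside
   x <= x' yields a copy of lift(x) below lift(x').  For the Glauber chains the law of the
   new value at v on the chain 0 < 1 < star is (1 - c, th c, (1 - th) c) for pi-GD and
   (1 - c, c, 0), or a point mass at star, for s-GD, where c is the conditional probability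
   of a 1 at v under mu resp. under its tilt; monotonicity of mu, which survives tilting,
   makes these laws stochastically increasing, and the quantile coupling on the three-point
   chain concludes. *)

From Pilot Require Import Defs.
From mathcomp Require Import all_boot all_order all_algebra.
From mathcomp Require Import ring lra.
Set Implicit Arguments. Unset Strict Implicit. Unset Printing Implicit Defensive.
Import Order.TTheory GRing.Theory Num.Theory.
Local Open Scope ring_scope.

Section Configurations.
Variable V : finType.
Implicit Types (x : cfg2 V) (X Y : cfg3 V) (u v : V) (s t : 'I_3).

Lemma I3_cases s : [\/ s = sZero, s = sOne | s = sStar].
Proof.
by case: s => [[|[|[|n]]] ?]; [constructor 1|constructor 2|constructor 3|];
  rewrite //; apply: val_inj.
Qed.

Lemma sum_I3 (M : nmodType) (F : 'I_3 -> M) :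
  \sum_s F s = F sZero + F sOne + F sStar.
Proof.
by rewrite !big_ord_recr big_ord0 /= add0r; congr (_ + _ + _); congr F; apply: val_inj.
Qed.

Lemma upd2_id x v : upd2 x v (x v) = x.
Proof. by apply/ffunP => u; rewrite ffunE; case: eqP => // ->. Qed.

Lemma upd2_upd2 x v b c : upd2 (upd2 x v b) v c = upd2 x v c.
Proof. by apply/ffunP => u; rewrite !ffunE; case: (u == v). Qed.

Lemma upd3_same X v s : upd3 X v s v = s.
Proof. by rewrite ffunE eqxx. Qed.

Lemma upd3_id X v : upd3 X v (X v) = X.
Proof. by apply/ffunP => u; rewrite ffunE; case: eqP => // ->. Qed.

Lemma upd3_upd3 X v s t : upd3 (upd3 X v s) v t = upd3 X v t.
Proof. by apply/ffunP => u; rewrite !ffunE; case: (u == v). Qed.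

Lemma contr_upd3 X v s : contr (upd3 X v s) = upd2 (contr X) v (s != sZero).
Proof. by apply/ffunP => u; rewrite !ffunE; case: (u == v). Qed.

Lemma agree_off_upd3 v X Y s :
  (agree_off v X Y && (Y v == s)) = (Y == upd3 X v s).
Proof.
apply/andP/eqP => [[/forallP agXY /eqP <-]|->].
  apply/ffunP => u; rewrite ffunE; case: eqP => [-> //|/eqP uv].
  by apply/eqP; move/implyP: (agXY u); apply.
rewrite upd3_same; split => //; apply/forallP => u; apply/implyP => uv.
by rewrite ffunE (negbTE uv).
Qed.

Lemma agree_offC v X Y : agree_off v X Y = agree_off v Y X.
Proof. by apply: eq_forallb => u; rewrite [Y u == _]eq_sym. Qed.

Lemma agree_offE v X Y : agree_off v X Y -> Y = upd3 X v (Y v).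
Proof. by move=> agXY; apply/eqP; rewrite -agree_off_upd3 agXY eqxx. Qed.

Lemma sum_agree_off (M : nmodType) v X (h : cfg3 V -> M) :
  \sum_Y (if agree_off v X Y then h Y else 0) = \sum_s h (upd3 X v s).
Proof.
rewrite -big_mkcond (partition_big (fun Y : cfg3 V => Y v) predT) //=.
by apply: eq_bigr => s _; apply: big_pred1 => Y; rewrite /= agree_off_upd3.
Qed.

Lemma le3_upd3 X X' v s s' :
  le3 X X' -> (s <= s')%N -> le3 (upd3 X v s) (upd3 X' v s').
Proof.
by move=> /forallP leXX' ss'; apply/forallP => u; rewrite !ffunE; case: eqP.
Qed.

Lemma le3_contr X X' u : le3 X X' -> contr X u ==> contr X' u.
Proof.
move=> /forallP /(_ u); rewrite !ffunE.
by case: (X u) => [[|n] ?] //; case: (X' u) => [[|m] ?].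
Qed.

Lemma le3_star X X' v : le3 X X' -> X v = sStar -> X' v = sStar.
Proof.
move=> /forallP /(_ v) + Xv; rewrite Xv.
by case: (I3_cases (X' v)) => ->.
Qed.

End Configurations.

Section Coupling.
Variable R : realFieldType.

Definition dominated3 (p q : 'I_3 -> R) :=
  p sStar <= q sStar /\ p sOne + p sStar <= q sOne + q sStar.

Lemma dominated3_coupling (p q g g' : 'I_3 -> R) :
  (forall s, 0 <= p s) -> (forall s, 0 <= q s) ->
  \sum_s p s = \sum_s q s -> dominated3 p q ->
  (forall s s' : 'I_3, (s <= s')%N -> 0 < p s -> 0 < q s' -> g s <= g' s') ->
  \sum_s p s * g s <= \sum_s q s * g' s.
Proof.
move=> p_ge0 q_ge0; rewrite !sum_I3 => mass [dom2 dom12] g_le.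
have move_ge0 (s s' : 'I_3) m : (s <= s')%N -> 0 <= m -> m <= p s -> m <= q s' ->
    0 <= m * (g' s' - g s).
  move=> ss'; rewrite le_eqVlt => /predU1P [<- | m_gt0] mp mq; first by rewrite mul0r.
  apply: mulr_ge0; first exact: ltW.
  rewrite subr_ge0 g_le //.
    exact: lt_le_trans mp.
  exact: lt_le_trans mq.
have p0 := p_ge0 sZero; have p1 := p_ge0 sOne; have p2 := p_ge0 sStar.
have q0 := q_ge0 sZero; have q1 := q_ge0 sOne; have q2 := q_ge0 sStar.
have q2E : q sStar = p sZero + p sOne + p sStar - q sZero - q sOne by lra.
(* The two cases are the two possible orders of p 0 and q 0 + q 1 in the quantile coupling. *)
rewrite -subr_ge0; case: (lerP (p sZero) (q sZero + q sOne)) => split.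
- have -> : q sZero * g' sZero + q sOne * g' sOne + q sStar * g' sStar -
      (p sZero * g sZero + p sOne * g sOne + p sStar * g sStar) =
    q sZero * (g' sZero - g sZero) + (p sZero - q sZero) * (g' sOne - g sZero) +
    (q sZero + q sOne - p sZero) * (g' sOne - g sOne) +
    (q sStar - p sStar) * (g' sStar - g sOne) + p sStar * (g' sStar - g sStar).
    by rewrite q2E; ring.
  by rewrite !addr_ge0 //; apply: move_ge0 => //; lra.
- have -> : q sZero * g' sZero + q sOne * g' sOne + q sStar * g' sStar -
      (p sZero * g sZero + p sOne * g sOne + p sStar * g sStar) =
    q sZero * (g' sZero - g sZero) + q sOne * (g' sOne - g sZero) +
    (p sZero - q sZero - q sOne) * (g' sStar - g sZero) +
    p sOne * (g' sStar - g sOne) + p sStar * (g' sStar - g sStar).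
    by rewrite q2E; ring.
  by rewrite !addr_ge0 //; apply: move_ge0 => //; lra.
Qed.

End Coupling.

Lemma inMC_eq (R : realFieldType) (V : finType) (th : R) (mu : cfg2 V -> R)
    (P Q : cfg3 V -> cfg3 V -> R) :
  P =2 Q -> inMC th mu Q -> inMC th mu P.
Proof.
move=> PQ [rev mono]; split=> [X Y SX SY | f f_ge0 f_incr X Y SX SY leXY].
  by rewrite !PQ; apply: rev.
under eq_bigr do rewrite PQ; under [leRHS]eq_bigr do rewrite PQ.
exact: mono.
Qed.

Section SiteChains.
Variables (R : realFieldType) (V : finType) (w : V -> cfg3 V -> 'I_3 -> R).
Implicit Types (X Y : cfg3 V) (v : V) (s t : 'I_3).

Definition site_chain X Y : R :=
  (#|V|%:R)^-1 * \sum_v (if agree_off v X Y then w v X (Y v) else 0).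

Lemma site_chain_reversible (p : cfg3 V -> R) (S : pred (cfg3 V)) :
  (forall v X s t, S (upd3 X v s) -> S (upd3 X v t) ->
     p (upd3 X v s) * w v (upd3 X v s) t = p (upd3 X v t) * w v (upd3 X v t) s) ->
  reversible site_chain p S.
Proof.
move=> balance X Y SX SY; rewrite /site_chain mulrCA [RHS]mulrCA; congr (_ * _).
rewrite !mulr_sumr; apply: eq_bigr => v _.
rewrite [agree_off v Y X]agree_offC; case: ifP => [agXY|]; last by rewrite !mulr0.
have YE := agree_offE agXY; set t := Y v in YE *; rewrite {}YE in SY *.
by have := balance v X (X v) t; rewrite !upd3_id; apply.
Qed.

Lemma site_chain_sum X (g : cfg3 V -> R) :
  \sum_Y site_chain X Y * g Y =
  (#|V|%:R)^-1 * \sum_v \sum_s w v X s * g (upd3 X v s).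
Proof.
under eq_bigr do rewrite -mulrA mulr_suml.
rewrite -mulr_sumr exchange_big; congr (_ * _); apply: eq_bigr => v _.
under eq_bigr do rewrite (fun_if (fun a => a * g _)) mul0r.
by rewrite sum_agree_off; under eq_bigr do rewrite upd3_same.
Qed.

Lemma site_chain_monotone (S : pred (cfg3 V)) :
  (forall v X s, S X -> 0 <= w v X s) ->
  (forall v X, S X -> \sum_s w v X s = 1) ->
  (forall v X s, S X -> 0 < w v X s -> S (upd3 X v s)) ->
  (forall v X X', S X -> S X' -> le3 X X' -> dominated3 (w v X) (w v X')) ->
  stoch_monotone site_chain S.
Proof.
move=> w_ge0 w_sum w_supp w_dom f f_ge0 f_incr X X' SX SX' leXX'.
pose F Y := if S Y then f Y else 0.
have restrictF Z : \sum_(Y | S Y) site_chain Z Y * f Y = \sum_Y site_chain Z Y * F Y.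
  by rewrite big_mkcond; apply: eq_bigr => Y _; rewrite /F; case: ifP; rewrite ?mulr0.
rewrite !restrictF !site_chain_sum ler_wpM2l ?invr_ge0 ?ler0n //.
apply: ler_sum => v _; apply: dominated3_coupling.
1, 2: by move=> s; apply: w_ge0.
- by rewrite !w_sum.
- exact: w_dom.
move=> s s' ss' ps qs'; rewrite /F !w_supp //.
by apply: f_incr; rewrite ?w_supp ?le3_upd3.
Qed.

End SiteChains.

Section Conditional.
Variables (R : realFieldType) (V : finType) (nu : cfg2 V -> R).
Hypothesis nu_ge0 : forall x, 0 <= nu x.
Implicit Types (x y : cfg2 V) (v : V).

Lemma cond1_ge0 v x : 0 <= cond1 nu v x.
Proof. by rewrite divr_ge0 ?addr_ge0. Qed.

Lemma cond1_le1 v x : cond1 nu v x <= 1.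
Proof.
rewrite /cond1; set a := nu (upd2 x v true); set b := nu (upd2 x v false).
have [->|D0] := eqVneq (b + a) 0; first by rewrite invr0 mulr0.
have D_gt0 : 0 < b + a by rewrite lt0r D0 addr_ge0 ?nu_ge0.
by rewrite ler_pdivrMr // mul1r lerDr; apply: nu_ge0.
Qed.

Lemma feasibleE v x :
  feasible nu v x = (0 < nu (upd2 x v false)) || (0 < nu (upd2 x v true)).
Proof.
by rewrite /feasible !lt0r !nu_ge0 addr_ge0 // paddr_eq0 // !andbT negb_and.
Qed.

Lemma feasible_upd2 v x b : 0 < nu (upd2 x v b) -> feasible nu v x.
Proof. by rewrite feasibleE; case: b => ->; rewrite ?orbT. Qed.

Lemma feasible_pos v x : 0 < nu x -> feasible nu v x.
Proof. by rewrite -{1}(upd2_id x v); apply: feasible_upd2. Qed.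

Lemma cond1_upd2 v x b : cond1 nu v (upd2 x v b) = cond1 nu v x.
Proof. by rewrite /cond1 !upd2_upd2. Qed.

Lemma cond1_gt0 v x : 0 < cond1 nu v x -> 0 < nu (upd2 x v true).
Proof.
move=> c_gt0; rewrite lt0r nu_ge0 andbT.
by apply: contraTneq c_gt0; rewrite /cond1 => ->; rewrite mul0r ltxx.
Qed.

Lemma subr_cond1 v x : feasible nu v x ->
  1 - cond1 nu v x = nu (upd2 x v false) / (nu (upd2 x v false) + nu (upd2 x v true)).
Proof.
by move=> /lt0r_neq0 D0; rewrite /cond1; apply/eqP; rewrite subr_eq -mulrDl divff.
Qed.

Lemma cond1_lt1 v x : feasible nu v x -> cond1 nu v x < 1 -> 0 < nu (upd2 x v false).
Proof.
move=> feas; rewrite -subr_gt0 subr_cond1 // => c_lt1.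
rewrite lt0r nu_ge0 andbT; apply: contraTneq c_lt1 => ->; by rewrite mul0r ltxx.
Qed.

Lemma cond1_le_cross v x y : feasible nu v x -> feasible nu v y ->
  (cond1 nu v x <= cond1 nu v y) =
  (nu (upd2 x v true) * nu (upd2 y v false) <= nu (upd2 y v true) * nu (upd2 x v false)).
Proof.
move=> feas_x feas_y; rewrite /cond1 ler_pdivrMr // mulrAC ler_pdivlMr //.
by rewrite !mulrDr [nu (upd2 y v true) * nu (upd2 x v true)]mulrC lerD2r.
Qed.

End Conditional.

Lemma cond1_contr_le3 (R : realFieldType) (V : finType) (nu : cfg2 V -> R)
    (v : V) (X X' : cfg3 V) :
  monotone_system nu -> 0 < nu (contr X) -> 0 < nu (contr X') -> le3 X X' ->
  cond1 nu v (contr X) <= cond1 nu v (contr X').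
Proof.
move=> [[nu_ge0 _] mono] SX SX' leXX'.
by apply: mono; rewrite ?feasible_pos // => u _; apply: le3_contr.
Qed.

Section Tilt.
Variables (R : realFieldType) (V : finType) (th : R) (mu : cfg2 V -> R).
Hypotheses (th_gt0 : 0 < th) (mu_distr : is_distr mu).
Implicit Types (x y : cfg2 V) (v : V).

Let mu_ge0 : forall x, 0 <= mu x. Proof. by case: mu_distr. Qed.

Let Z := \sum_y mu y * th ^+ ones y.

Let Z_gt0 : 0 < Z.
Proof.
have term_ge0 y : 0 <= mu y * th ^+ ones y by rewrite mulr_ge0 // exprn_ge0 // ltW.
rewrite lt0r sumr_ge0 // andbT psumr_neq0 //.
have : \sum_y mu y != 0 by case: mu_distr => _ ->; apply: oner_neq0.
by rewrite psumr_neq0 //; apply: sub_has => y /=; rewrite pmulr_lgt0 ?exprn_gt0.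
Qed.

Lemma ones_upd2_true x v : ones (upd2 x v true) = (ones (upd2 x v false)).+1.
Proof.
rewrite /ones.
have -> : [set u | upd2 x v true u] = v |: [set u | upd2 x v false u].
  by apply/setP => u; rewrite !inE !ffunE; case: (u == v).
by rewrite cardsU1 !inE ffunE eqxx.
Qed.

Lemma tilt_ge0 x : 0 <= tilt th mu x.
Proof. by rewrite /tilt divr_ge0 ?mulr_ge0 ?exprn_ge0 ?mu_ge0 // ltW. Qed.

Lemma tilt_gt0 x : (0 < tilt th mu x) = (0 < mu x).
Proof. by rewrite /tilt -mulrA pmulr_lgt0 // divr_gt0 // exprn_gt0. Qed.

Lemma tilt_distr : is_distr (tilt th mu).
Proof. by split; [apply: tilt_ge0 | rewrite -mulr_suml divff ?gt_eqF]. Qed.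

Lemma feasible_tilt v x : feasible (tilt th mu) v x = feasible mu v x.
Proof. by rewrite !feasibleE ?tilt_gt0 //; apply: tilt_ge0. Qed.

Lemma tilt_cross x v :
  mu (upd2 x v false) * tilt th mu (upd2 x v true) =
  th * (mu (upd2 x v true) * tilt th mu (upd2 x v false)).
Proof. by rewrite /tilt ones_upd2_true exprS; ring. Qed.

Lemma monotone_system_tilt : monotone_system mu -> monotone_system (tilt th mu).
Proof.
move=> [_ mono]; split=> [|v x y le_xy feas_x feas_y]; first exact: tilt_distr.
rewrite feasible_tilt in feas_x; rewrite feasible_tilt in feas_y.
have := mono v x y le_xy feas_x feas_y.
rewrite !cond1_le_cross ?feasible_tilt //.
have tiltE z w :
    tilt th mu (upd2 z v true) * tilt th mu (upd2 w v false) =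
    mu (upd2 z v true) * mu (upd2 w v false) *
    (th * th ^+ ones (upd2 z v false) * th ^+ ones (upd2 w v false) / (Z * Z)).
  by rewrite /tilt ones_upd2_true exprS -/Z invfM; ring.
rewrite !tiltE [th * th ^+ ones (upd2 y v false) * _]mulrAC.
by rewrite ler_pM2r // !(mulr_gt0, exprn_gt0, invr_gt0).
Qed.

End Tilt.

(* [Defs.pi] and [Defs.liftK] are qualified since MathComp exports its own [pi] and [liftK]. *)
Section Lift.
Variables (R : realFieldType) (V : finType) (th : R).
Implicit Types (x : cfg2 V) (X Y : cfg3 V) (u v : V) (s : 'I_3) (mu : cfg2 V -> R).

Definition lift_weight s : R :=
  if s == sZero then 1 else if s == sOne then th else 1 - th.

Definition lift_mass Y : R := \prod_u lift_weight (Y u).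

Definition lift_mass_off v Y : R := \prod_(u | u != v) lift_weight (Y u).

Lemma liftpE b s : liftp th b s = if b == (s != sZero) then lift_weight s else 0.
Proof. by rewrite /liftp /lift_weight; case: b; case: (I3_cases s) => ->. Qed.

Lemma liftp_sum b : \sum_s liftp th b s = 1.
Proof. by rewrite sum_I3 /liftp; case: b => /=; ring. Qed.

Lemma liftK_E x Y : Defs.liftK th x Y = if x == contr Y then lift_mass Y else 0.
Proof.
rewrite /Defs.liftK; case: eqP => [->|/eqP x_neq].
  by apply: eq_bigr => u _; rewrite liftpE ffunE eqxx.
have [u xu_neq] : exists u, x u != contr Y u.
  by apply/existsP; rewrite -negb_forall; apply: contra x_neq => /eqfunP/ffunP->.
by rewrite (bigD1 u) //= liftpE -(ffunE (fun u => Y u != sZero)) (negbTE xu_neq) mul0r.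
Qed.

Lemma piE mu Y : Defs.pi th mu Y = mu (contr Y) * lift_mass Y.
Proof.
rewrite /Defs.pi (bigD1 (contr Y)) //= liftK_E eqxx big1 ?addr0 // => x x_neq.
by rewrite liftK_E (negbTE x_neq) mulr0.
Qed.

Lemma lift_mass_upd3 X v s : lift_mass (upd3 X v s) = lift_weight s * lift_mass_off v X.
Proof.
rewrite /lift_mass (bigD1 v) //= upd3_same; congr (_ * _).
by apply: eq_bigr => u uv; rewrite ffunE (negbTE uv).
Qed.

Lemma pi_upd3 mu X v s :
  Defs.pi th mu (upd3 X v s) =
  mu (upd2 (contr X) v (s != sZero)) * lift_weight s * lift_mass_off v X.
Proof. by rewrite piE contr_upd3 lift_mass_upd3 mulrA. Qed.

Lemma P_cl_reversible mu : reversible (P_cl th mu) (Defs.pi th mu) (Omega th mu).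
Proof.
move=> X Y _ _; rewrite /P_cl !piE !liftK_E eq_sym.
by case: eqP => [->|_]; [ring | rewrite !mulr0].
Qed.

Definition zero_off x Y : cfg3 V := [ffun u => if x u then Y u else sZero].

Lemma contr_zero_off x Y : (forall u, x u ==> contr Y u) -> contr (zero_off x Y) = x.
Proof.
move=> le_x; apply/ffunP => u; rewrite !ffunE.
by move: (le_x u); rewrite ffunE; case: (x u).
Qed.

Lemma le3_zero_off x Y : le3 (zero_off x Y) Y.
Proof. by apply/forallP => u; rewrite ffunE; case: (x u). Qed.

Lemma liftK_zero_off x x' Y : (forall u, x u ==> x' u) ->
  \sum_(Y' | zero_off x Y' == Y) Defs.liftK th x' Y' = Defs.liftK th x Y.
Proof.
move=> le_x; pose Q u s := (if x u then s else sZero) == Y u.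
have fam Y' : (Y' \in family Q) = (zero_off x Y' == Y).
  apply/familyP/eqP => [fQ | E u]; last by rewrite unfold_in /Q -E ffunE.
  by apply/ffunP => u; rewrite ffunE; apply/eqP; have := fQ u; rewrite unfold_in.
rewrite -(eq_bigl _ _ fam) /Defs.liftK.
transitivity (\prod_u \sum_(s | Q u s) liftp th (x' u) s).
  by rewrite bigA_distr_big_dep.
apply: eq_bigr => u _.
rewrite /Q; move: (le_x u); case: (x u); case: (x' u) => // _; first exact: big_pred1_eq.
all: have [->|Yu0] := eqVneq (Y u) sZero; first by rewrite liftp_sum.
all: by rewrite big_pred0 // /liftp (negbTE Yu0).
Qed.

Lemma sum_liftK_zero_off x x' (g : cfg3 V -> R) : (forall u, x u ==> x' u) ->
  \sum_Y Defs.liftK th x Y * g Y = \sum_Y' Defs.liftK th x' Y' * g (zero_off x Y').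
Proof.
move=> le_x; rewrite [RHS](partition_big (zero_off x) predT) //=.
apply: eq_bigr => Y _; rewrite -(liftK_zero_off Y le_x) big_distrl /=.
by apply: eq_bigr => Y' /eqP ->.
Qed.

Hypothesis th01 : 0 < th < 1.

Lemma lift_weight_gt0 s : 0 < lift_weight s.
Proof.
case/andP: th01 => th_gt0 th_lt1.
by rewrite /lift_weight; case: (I3_cases s) => -> //=; rewrite subr_gt0.
Qed.

Lemma lift_mass_gt0 Y : 0 < lift_mass Y.
Proof. by apply: prodr_gt0 => u _; apply: lift_weight_gt0. Qed.

Lemma lift_mass_off_gt0 v Y : 0 < lift_mass_off v Y.
Proof. by apply: prodr_gt0 => u _; apply: lift_weight_gt0. Qed.

Lemma pi_ge0 mu Y : (forall x, 0 <= mu x) -> 0 <= Defs.pi th mu Y.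
Proof. by move=> mu_ge0; rewrite piE mulr_ge0 // ltW ?lift_mass_gt0. Qed.

Lemma OmegaE mu Y : Omega th mu Y = (0 < mu (contr Y)).
Proof. by rewrite /Omega piE pmulr_lgt0 // lift_mass_gt0. Qed.

Lemma Omega_upd3 mu X v s :
  Omega th mu (upd3 X v s) = (0 < mu (upd2 (contr X) v (s != sZero))).
Proof. by rewrite OmegaE contr_upd3. Qed.

Lemma P_cl_monotone mu : stoch_monotone (P_cl th mu) (Omega th mu).
Proof.
move=> f f_ge0 f_incr X X' SX SX' leXX'.
pose F Y := if Omega th mu Y then f Y else 0.
have restrictF Z : \sum_(Y | Omega th mu Y) P_cl th mu Z Y * f Y =
    \sum_Y Defs.liftK th (contr Z) Y * F Y.
  by rewrite big_mkcond; apply: eq_bigr => Y _; rewrite /F; case: ifP; rewrite ?mulr0.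
rewrite !restrictF (sum_liftK_zero_off _ (fun u => le3_contr u leXX')).
apply: ler_sum => Y _; rewrite liftK_E; case: eqP => [XY|_]; last by rewrite !mul0r.
apply: ler_wpM2l; first exact/ltW/lift_mass_gt0.
have SY : Omega th mu Y by rewrite OmegaE -XY -OmegaE.
have SY0 : Omega th mu (zero_off (contr X) Y).
  by rewrite OmegaE contr_zero_off -?OmegaE // -XY => u; apply: le3_contr.
by rewrite /F SY SY0; apply: f_incr; rewrite ?le3_zero_off.
Qed.

End Lift.

Section PiGlauber.
Variables (R : realFieldType) (V : finType) (th : R) (mu : cfg2 V -> R).
Implicit Types (X : cfg3 V) (v : V) (s t : 'I_3).

Definition pi_cond v X s : R :=
  Defs.pi th mu (upd3 X v s) / \sum_t Defs.pi th mu (upd3 X v t).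

Lemma P_piGD_site : P_piGD th mu =2 site_chain pi_cond.
Proof.
move=> X Y; rewrite /P_piGD /site_chain; congr (_ * _); apply: eq_bigr => v _.
by case: ifP => // agXY; rewrite /pi_cond -(agree_offE agXY).
Qed.

Lemma pi_cond_upd3 v X s t : pi_cond v (upd3 X v s) t = pi_cond v X t.
Proof.
by rewrite /pi_cond upd3_upd3; congr (_ / _); apply: eq_bigr => r _; rewrite upd3_upd3.
Qed.

Lemma pi_cond_balance v X s t :
  Defs.pi th mu (upd3 X v s) * pi_cond v (upd3 X v s) t =
  Defs.pi th mu (upd3 X v t) * pi_cond v (upd3 X v t) s.
Proof. by rewrite !pi_cond_upd3 /pi_cond mulrCA. Qed.

Hypotheses (th01 : 0 < th < 1) (mu_mono : monotone_system mu).

Let mu_ge0 : forall x, 0 <= mu x. Proof. by case: mu_mono => [[]]. Qed.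

Lemma sum_pi_upd3 v X :
  \sum_t Defs.pi th mu (upd3 X v t) =
  (mu (upd2 (contr X) v false) + mu (upd2 (contr X) v true)) * lift_mass_off th v X.
Proof. by rewrite sum_I3 !pi_upd3 /lift_weight /=; ring. Qed.

Lemma pi_condE v X s :
  pi_cond v X s = lift_weight th s *
    (mu (upd2 (contr X) v (s != sZero)) /
     (mu (upd2 (contr X) v false) + mu (upd2 (contr X) v true))).
Proof.
have K_neq0 := lt0r_neq0 (lift_mass_off_gt0 th01 v X).
rewrite /pi_cond sum_pi_upd3 pi_upd3 invfM -[RHS]mulr1 -(divff K_neq0).
ring.
Qed.

Lemma pi_cond_ge0 v X s : 0 <= pi_cond v X s.
Proof. by apply: divr_ge0; [|apply: sumr_ge0 => t _]; apply: pi_ge0. Qed.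

Lemma pi_cond_sum v X : Omega th mu X -> \sum_s pi_cond v X s = 1.
Proof.
rewrite OmegaE // => /(feasible_pos mu_ge0 v) feas.
by rewrite -mulr_suml divff // sum_pi_upd3 mulf_neq0 ?lt0r_neq0 ?lift_mass_off_gt0.
Qed.

Lemma Omega_pi_cond v X s : 0 < pi_cond v X s -> Omega th mu (upd3 X v s).
Proof.
move=> w_gt0; rewrite /Omega lt0r pi_ge0 // andbT.
by apply: contraTneq w_gt0; rewrite /pi_cond => ->; rewrite mul0r ltxx.
Qed.

Lemma pi_cond_dominated v X X' : Omega th mu X -> Omega th mu X' -> le3 X X' ->
  dominated3 (pi_cond v X) (pi_cond v X').
Proof.
rewrite !OmegaE // => SX SX' leXX'.
have c_le := cond1_contr_le3 v mu_mono SX SX' leXX'.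
rewrite /dominated3 !pi_condE /lift_weight /= -!mulrDl subrKC !mul1r.
split=> //; apply: ler_wpM2l => //.
by case/andP: th01 => _ /ltW; rewrite subr_ge0.
Qed.

Lemma P_piGD_inMC : inMC th mu (P_piGD th mu).
Proof.
apply: (inMC_eq P_piGD_site); split.
  by apply: site_chain_reversible => v X s t _ _; apply: pi_cond_balance.
apply: site_chain_monotone => *.
- exact: pi_cond_ge0.
- exact: pi_cond_sum.
- exact: Omega_pi_cond.
- exact: pi_cond_dominated.
Qed.

End PiGlauber.

Section SGlauber.
Variables (R : realFieldType) (V : finType) (th : R) (mu : cfg2 V -> R).
Implicit Types (X : cfg3 V) (v : V) (s t : 'I_3).

Definition sgd_cond v X s : R :=
  let c := cond1 (tilt th mu) v (contr X) in
  if X v == sStar then (s == sStar)%:R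
  else if s == sZero then 1 - c else if s == sOne then c else 0.

Lemma P_sGD_site : P_sGD th mu =2 site_chain sgd_cond.
Proof.
move=> X Y; rewrite /P_sGD /site_chain; congr (_ * _); apply: eq_bigr => v _.
rewrite /sGDv /sgd_cond; case: eqP => [Xv|_].
  have -> : (Y == X) = agree_off v X Y && (Y v == sStar).
    by rewrite agree_off_upd3 -Xv upd3_id.
  by case: (agree_off v X Y).
by case: (agree_off v X Y) => //=; case: (I3_cases (Y v)) => ->.
Qed.

Lemma sgd_cond_upd3 v X s t :
  sgd_cond v (upd3 X v s) t =
  if s == sStar then (t == sStar)%:R
  else let c := cond1 (tilt th mu) v (contr X) in
    if t == sZero then 1 - c else if t == sOne then c else 0.
Proof. by rewrite /sgd_cond upd3_same contr_upd3 cond1_upd2. Qed.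

Hypotheses (th01 : 0 < th < 1) (mu_distr : is_distr mu).

Let th_gt0 : 0 < th. Proof. by case/andP: th01. Qed.
Let mu_ge0 : forall x, 0 <= mu x. Proof. by case: mu_distr. Qed.
Let tilt_mu_ge0 : forall x, 0 <= tilt th mu x := tilt_ge0 th_gt0 mu_distr.

Lemma sgd_cond_balance v X s t :
  feasible mu v (contr X) ->
  Defs.pi th mu (upd3 X v s) * sgd_cond v (upd3 X v s) t =
  Defs.pi th mu (upd3 X v t) * sgd_cond v (upd3 X v t) s.
Proof.
rewrite -(feasible_tilt th_gt0 mu_distr) => feas.
have balance01 : Defs.pi th mu (upd3 X v sZero) * cond1 (tilt th mu) v (contr X) =
    Defs.pi th mu (upd3 X v sOne) * (1 - cond1 (tilt th mu) v (contr X)).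
  rewrite !pi_upd3 subr_cond1 // /cond1 /lift_weight /=.
  set D := tilt th mu _ + _; set K := lift_mass_off th v X.
  transitivity (K / D * (mu (upd2 (contr X) v false) * tilt th mu (upd2 (contr X) v true))).
    by ring.
  by rewrite tilt_cross; ring.
rewrite !sgd_cond_upd3.
by case: (I3_cases s) => ->; case: (I3_cases t) => -> //=; rewrite ?mulr0.
Qed.

Lemma sgd_cond_ge0 v X s : 0 <= sgd_cond v X s.
Proof.
have c_ge0 := cond1_ge0 tilt_mu_ge0 v (contr X).
have c_le1 := cond1_le1 tilt_mu_ge0 v (contr X).
rewrite /sgd_cond; case: (X v == sStar); first exact: ler0n.
by case: (I3_cases s) => -> //=; rewrite subr_ge0.
Qed.

Lemma sgd_cond_sum v X : \sum_s sgd_cond v X s = 1.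
Proof. by rewrite sum_I3 /sgd_cond; case: (X v == sStar) => /=; ring. Qed.

Lemma Omega_sgd_cond v X s : Omega th mu X -> 0 < sgd_cond v X s ->
  Omega th mu (upd3 X v s).
Proof.
move=> SX; rewrite /sgd_cond; case: eqP => [Xv|_].
  by case: eqP => [->|_]; [rewrite -Xv upd3_id | rewrite ltxx].
have feas : feasible (tilt th mu) v (contr X).
  by rewrite feasible_tilt // feasible_pos // -(OmegaE th01).
rewrite (Omega_upd3 th01); case: (I3_cases s) => -> /=; last by rewrite ltxx.
  by rewrite subr_gt0 -(tilt_gt0 th_gt0 mu_distr); apply: cond1_lt1.
by rewrite -(tilt_gt0 th_gt0 mu_distr); apply: cond1_gt0.
Qed.

Hypothesis mu_mono : monotone_system mu.

Lemma sgd_cond_dominated v X X' : Omega th mu X -> Omega th mu X' -> le3 X X' ->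
  dominated3 (sgd_cond v X) (sgd_cond v X').
Proof.
rewrite !(OmegaE th01) -!(tilt_gt0 th_gt0 mu_distr) => SX SX' leXX'.
rewrite /dominated3 /sgd_cond.
have [Xv|Xv] := eqVneq (X v) sStar; first by rewrite (le3_star leXX' Xv) eqxx.
have [X'v|X'v] := eqVneq (X' v) sStar; rewrite /= !addr0.
  by rewrite add0r; split=> //; apply: cond1_le1; exact: tilt_mu_ge0.
by split=> //; apply: cond1_contr_le3 => //; apply: monotone_system_tilt.
Qed.

Lemma P_sGD_inMC : inMC th mu (P_sGD th mu).
Proof.
apply: (inMC_eq P_sGD_site); split.
  apply: site_chain_reversible => v X s t SXs _; apply: sgd_cond_balance.
  by move: SXs; rewrite (Omega_upd3 th01); apply: feasible_upd2.
apply: site_chain_monotone => *.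
- exact: sgd_cond_ge0.
- exact: sgd_cond_sum.
- exact: Omega_sgd_cond.
- exact: sgd_cond_dominated.
Qed.

End SGlauber.

Theorem lemma3p5 (R : realFieldType) (V : finType) (mu : cfg2 V -> R) (th : R) :
  monotone_system mu -> 0 < th < 1 ->
  [/\ inMC th mu (P_cl th mu), inMC th mu (P_sGD th mu) & inMC th mu (P_piGD th mu)].
Proof.
move=> mu_mono th01; have [mu_distr _] := mu_mono.
split; last exact: P_piGD_inMC.
- by split; [apply: P_cl_reversible | apply: P_cl_monotone].
- exact: P_sGD_inMC.
Qed.
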